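(* Let $X_1,\dots,X_d$ be discrete random variables, $X_j$ taking values in $\{0,1,\dots,r_j\}$, fix $M\subseteq\{1,\dots,d\}$, and let $\pi=p(M)$ be the (strictly positive) vector of joint probabilities of $(X_j)_{j\in M}$. Let $\mathcal V\subseteq\mathcal P(M)$, $\mathcal I\subseteq\mathcal V$, $\mathcal R=\mathcal V\setminus\mathcal I$, and let $\mathcal H$ be a collection of interaction blocks from $\mathcal P(M)\setminus\mathcal V$ whose total number of parameters (columns of $G_{\mathcal H}$) equals that of $\mathcal I$. Put $$A=F_{\mathcal H\mathcal H}-F_{\mathcal H\mathcal R}F_{\mathcal R\mathcal R}^{-1}F_{\mathcal R\mathcal H},\qquad B=F_{\mathcal H\mathcal H}-F_{\mathcal H\mathcal V}F_{\mathcal V\mathcal V}^{-1}F_{\mathcal V\mathcal H},\qquad J=A^{-1}B,$$ $$Q_{\mathcal I\mathcal H\mid\mathcal R}=F_{\mathcal I\mathcal H}-F_{\mathcal I\mathcal R}F_{\mathcal R\mathcal R}^{-1}F_{\mathcal R\mathcal H}.$$ Then the spectral radius (maximum absolute eigenvalue) of $J$ is strictly less than $1$, except when $Q_{\mathcal I\mathcal H\mid\mathcal R}$ is not of full rank (in which case it equals $1$).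
   Context: Notation: $\mathcal P(M)$ is the set of nonempty subsets of $M$. For $\emptyset\ne I\subseteq M$, $G(I,M)=\bigotimes_{j\in M}G_j$ where $G_j$ is the identity matrix of order $r_j+1$ with its first column removed if $j\in I$, and $G_j=\mathbf 1_{r_j+1}$ otherwise (cells ordered lexicographically). An ''interaction block'' is either $G(v,M)$ for some $v\in\mathcal P(M)$, or, for disjoint $t,h$ with $t\cup h=v$ and a vector $j_h$ of categories all different from $0$, the submatrix $G_{t,h}(j_h)$ of $G(v,M)$ consisting of the columns where the variables in $h$ equal $j_h$. For a collection $\mathcal X$ of blocks, $G_{\mathcal X}$ is the matrix obtained by placing the blocks side by side; with $\Omega=\mathrm{diag}(\pi)-\pi\pi'$, $F_{\mathcal X\mathcal Y}=G_{\mathcal X}'\Omega G_{\mathcal Y}$. When $\mathcal R=\emptyset$ the terms involving $F_{\mathcal R\mathcal R}^{-1}$ are absent. *)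

(* pure linear algebra over an arbitrary real closed field R
   (the reals being the motivating instance); eigenvalues live in R[i]. *)
From HB Require Import structures.
From mathcomp Require Import all_boot all_order all_algebra.
From mathcomp.real_closed Require Import complex.
Set Implicit Arguments. Unset Strict Implicit. Unset Printing Implicit Defensive.
Import Order.TTheory GRing.Theory Num.Theory.
Local Open Scope ring_scope.

(* Variables are indexed by 'I_d (so X_j, j = 0..d-1); X_j takes
   values in {0,...,r j}.  A cell of the marginal table of (X_j)_{j in M}
   is represented by a dependent function x with x j = 0 for j \notin M. *)
Section Cells.
Variables (d : nat) (r : 'I_d -> nat) (M : {set 'I_d}).

Definition cell := {x : {dffun forall j : 'I_d, 'I_(r j).+1} |
                     [forall j, (j \notin M) ==> (nat_of_ord (x j) == 0%N)]}.

Definition supp (x : cell) : {set 'I_d} := [set j | nat_of_ord (val x j) != 0%N].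

(* Parameters (= columns of the matrices G(v,M), v in P(M)) are indexed by
   the pair (v, j_v), j_v a vector of nonzero categories on v; this pair is
   encoded as the cell x with supp x = v and x = j_v on v.
   Entry of G(v,M) in row (cell) y, column (parameter) x, with v = supp x:
   the tensor product of the columns of G_j = (I without first column) for
   j in v and of 1 for j \notin v, i.e. prod_{j in v} [y_j == x_j]. *)
Definition Gentry (R : nzRingType) (y x : cell) : R :=
  (\prod_(j in supp x) ((nat_of_ord (val y j) == nat_of_ord (val x j)) %:R))%R.

Definition cols (V : {set {set 'I_d}}) : {set cell} := [set x | supp x \in V].

(* An interaction block from P(M): either G(v,M) or G_{t,h}(j_h) with
   t,h disjoint, t :|: h = v, j_h a vector of nonzero categories on h.
   It is given by v and by a cell jh with supp jh = h (subset of v);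
   jh with empty support (h = set0, t = v) gives G(v,M) itself. *)
Definition iblock := ({set 'I_d} * cell)%type.
Definition ib_v (b : iblock) : {set 'I_d} := b.1.
Definition ib_jh (b : iblock) : cell := b.2.

Definition iblock_ok (b : iblock) : bool :=
  [&& ib_v b != set0, ib_v b \subset M & supp (ib_jh b) \subset ib_v b].

Definition bcols (b : iblock) : {set cell} :=
  [set x | (supp x == ib_v b) &&
           [forall j, (j \in supp (ib_jh b)) ==>
                      (nat_of_ord (val x j) == nat_of_ord (val (ib_jh b) j))]].

Definition hcols (H : seq iblock) : {set cell} := \bigcup_(b <- H) bcols b.

Variable R : rcfType.

(* G_S for a set S of parameters: rows are the cells, columns the
   parameters in S (both in the order given by enum). *)
Definition Gmx (S : {set cell}) : 'M[R]_(#|{: cell}|, #|S|) :=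
  \matrix_(i, k) Gentry R (enum_val i) (enum_val k).

Definition Omega (pi : cell -> R) : 'M[R]_(#|{: cell}|) :=
  \matrix_(i, k) ((i == k)%:R * pi (enum_val i) - pi (enum_val i) * pi (enum_val k)).

Definition Fmx (pi : cell -> R) (S T : {set cell}) : 'M[R]_(#|S|, #|T|) :=
  (Gmx S)^T *m Omega pi *m Gmx T.

(* A = F_HH - F_HR F_RR^-1 F_RH  (for RR = set0 the second term is the
   product through a 0-dimensional matrix, i.e. 0, i.e. absent) *)
Definition Amx (pi : cell -> R) (RR : {set {set 'I_d}}) (H : seq iblock) :=
  Fmx pi (hcols H) (hcols H)
  - Fmx pi (hcols H) (cols RR) *m invmx (Fmx pi (cols RR) (cols RR))
      *m Fmx pi (cols RR) (hcols H).

Definition Bmx (pi : cell -> R) (V : {set {set 'I_d}}) (H : seq iblock) :=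
  Fmx pi (hcols H) (hcols H)
  - Fmx pi (hcols H) (cols V) *m invmx (Fmx pi (cols V) (cols V))
      *m Fmx pi (cols V) (hcols H).

Definition Jmx (pi : cell -> R) (V I : {set {set 'I_d}}) (H : seq iblock) :=
  invmx (Amx pi (V :\: I) H) *m Bmx pi V H.

Definition Qmx (pi : cell -> R) (I RR : {set {set 'I_d}}) (H : seq iblock) :=
  Fmx pi (cols I) (hcols H)
  - Fmx pi (cols I) (cols RR) *m invmx (Fmx pi (cols RR) (cols RR))
      *m Fmx pi (cols RR) (hcols H).

End Cells.

(* Spectral radius of a real square matrix: the maximum modulus of its
   (complex) eigenvalues, i.e. of the roots of its characteristic
   polynomial in R[i]; 0 for the empty matrix. *)
Definition spectral_radius (R : rcfType) (n : nat) (A : 'M[R]_n) : R[i] :=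
  \big[Num.max/0]_(z <- sval (closed_field_poly_normal
        (char_poly (map_mx (fun a : R => (a%:C)%C) A)))) `|z|.

(* A and B are Schur complements, i.e. Omega-Gram matrices of the residuals of
   G_H after Omega-projection onto the columns of G_R, resp. of G_V.  Since the
   span of G_V is the Omega-orthogonal sum of those of G_R and of the residual Z
   of G_I, A - B = Q' (Z' Omega Z)^-1 Q with Q = Q_{IH|R} = Z' Omega G_H.
   Omega is the covariance matrix of the cell indicators and the columns of G
   with nonempty support are linearly independent modulo constants, so A is
   positive definite while B and A - B are positive semidefinite.  Hence every
   eigenvalue of A^-1 B is a Rayleigh quotient b / a with 0 <= b <= a; it is 1
   exactly when u Q' = 0 for some u <> 0, i.e. when Q is not of full rank. *)

From mathcomp Require Import all_boot all_order all_algebra.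
From mathcomp.real_closed Require Import complex.
From mathcomp Require Import ring.
Set Implicit Arguments. Unset Strict Implicit. Unset Printing Implicit Defensive.
Import Order.TTheory GRing.Theory Num.Theory.
Local Open Scope ring_scope.

Section QuadraticForm.
Variable R : rcfType.

Definition qform n (A : 'M[R]_n) (u : 'rV_n) : R := (u *m A *m u^T) 0 0.

Lemma qformB n (A B : 'M[R]_n) u : qform (A - B) u = qform A u - qform B u.
Proof. by rewrite /qform mulmxBr mulmxBl !mxE. Qed.

Lemma qform_def_unitmx n (A : 'M[R]_n) :
  (forall u, qform A u = 0 -> u = 0) -> A \in unitmx.
Proof.
move=> Adef; rewrite -row_free_unit -kermx_eq0; apply/rowV0P => u /sub_kermxP uA.
by apply: Adef; rewrite /qform uA mul0mx mxE.
Qed.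

End QuadraticForm.

Section GramMatrices.
Variables (R : rcfType) (N : nat) (Om : 'M[R]_N).
Hypothesis OmT : Om^T = Om.

Definition gram a b (X : 'M[R]_(N, a)) (Y : 'M[R]_(N, b)) := X^T *m Om *m Y.

(* [hatmx X *m Om] is the Om-orthogonal projection onto the column space of [X];
   the definition is locked so that rewriting with product lemmas cannot unfold it. *)
Fact hatmx_key : unit. Proof. exact: tt. Qed.
Definition hatmx a (X : 'M[R]_(N, a)) : 'M[R]_N :=
  locked_with hatmx_key (X *m invmx (gram X X) *m X^T).

Lemma hatmxE a (X : 'M[R]_(N, a)) : hatmx X = X *m invmx (gram X X) *m X^T.
Proof. by rewrite /hatmx unlock. Qed.

Definition resid a b (X : 'M[R]_(N, a)) (Y : 'M[R]_(N, b)) := Y - hatmx X *m Om *m Y.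

Lemma gramT a b (X : 'M[R]_(N, a)) (Y : 'M[R]_(N, b)) : (gram X Y)^T = gram Y X.
Proof. by rewrite /gram !trmx_mul trmxK OmT mulmxA. Qed.

Lemma hatmxT a (X : 'M[R]_(N, a)) : (hatmx X)^T = hatmx X.
Proof. by rewrite hatmxE !trmx_mul trmxK trmx_inv gramT mulmxA. Qed.

Lemma qform_gram b (W : 'M[R]_(N, b)) c : qform (gram W W) c = qform Om (c *m W^T).
Proof. by rewrite /qform /gram trmx_mul trmxK !mulmxA. Qed.

Lemma gram_unitmx b (W : 'M[R]_(N, b)) :
  (forall c, qform Om (c *m W^T) = 0 -> c = 0) -> gram W W \in unitmx.
Proof. by move=> Wfree; apply: qform_def_unitmx => c; rewrite qform_gram; apply: Wfree. Qed.

Lemma mul_gram_inv a b c (X : 'M[R]_(N, a)) (Y : 'M[R]_(N, b)) (Z : 'M[R]_(N, c)) :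
  gram Z X *m invmx (gram X X) *m gram X Y = Z^T *m Om *m hatmx X *m Om *m Y.
Proof. by rewrite /gram hatmxE !mulmxA. Qed.

Section Invertible.
Variables (a : nat) (X : 'M[R]_(N, a)).
Hypothesis gramX : gram X X \in unitmx.

Lemma hatmx_id : hatmx X *m Om *m X = X.
Proof.
have -> : hatmx X *m Om *m X = X *m (invmx (gram X X) *m gram X X).
  by rewrite hatmxE /gram !mulmxA.
by rewrite mulVmx // mulmx1.
Qed.

Lemma hatmx_idem : hatmx X *m Om *m hatmx X = hatmx X.
Proof. by rewrite {2}hatmxE !mulmxA hatmx_id -hatmxE. Qed.

Lemma hatmx_unique (P : 'M[R]_N) (K : 'M[R]_(a, N)) :
  P^T = P -> P = X *m K -> P *m Om *m X = X -> P = hatmx X.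
Proof.
move=> PT PXK POmX.
have hatP : hatmx X *m Om *m P = P by rewrite PXK !mulmxA hatmx_id.
have Phat : P *m Om *m hatmx X = hatmx X by rewrite hatmxE !mulmxA POmX.
by rewrite -{1}PT -hatP !trmx_mul PT OmT hatmxT mulmxA Phat.
Qed.

Lemma gram_resid b (Y : 'M[R]_(N, b)) : gram (resid X Y) X = 0.
Proof.
rewrite /gram /resid linearB /= !trmx_mul hatmxT OmT !mulmxBl.
by rewrite -!mulmxA [hatmx X *m _]mulmxA hatmx_id subrr.
Qed.

Lemma schur_gram b (Y : 'M[R]_(N, b)) :
  gram Y Y - gram Y X *m invmx (gram X X) *m gram X Y = gram (resid X Y) (resid X Y).
Proof.
rewrite mul_gram_inv /gram /resid [(Y - _)^T]linearB /= !trmx_mul hatmxT OmT.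
have idem : Y^T *m Om *m hatmx X *m Om *m hatmx X = Y^T *m Om *m hatmx X.
  by rewrite -!mulmxA [hatmx X *m (Om *m _)]mulmxA hatmx_idem.
by rewrite !mulmxBl !mulmxBr !mulmxA idem subrr subr0.
Qed.
End Invertible.

Lemma mul_tr_resid m a b (X : 'M[R]_(N, a)) (Y : 'M[R]_(N, b)) (c : 'M[R]_(m, b)) :
  c *m (resid X Y)^T =
  (- (c *m gram Y X *m invmx (gram X X))) *m X^T + c *m Y^T.
Proof.
rewrite /resid [(Y - _)^T]linearB /= !trmx_mul hatmxT OmT hatmxE /gram.
by rewrite mulmxBr mulNmx addrC !mulmxA.
Qed.

End GramMatrices.

Section SpectralRadius.
Variable R : rcfType.
Local Notation mc := (map_mx (real_complex R)).

Lemma bigmax_norm_le1 (s : seq R[i]) : {in s, forall z, `|z| <= 1} ->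
  \big[Num.max/0]_(z <- s) `|z| <= 1.
Proof.
elim: s => [|z s IHs] s_le1; first by rewrite big_nil ler01.
rewrite big_cons /Num.max; case: ifP => _; last exact: s_le1 (mem_head _ _).
by apply: IHs => y ys; apply: s_le1; rewrite inE ys orbT.
Qed.

Lemma bigmax_norm_lt1 (s : seq R[i]) : {in s, forall z, `|z| < 1} ->
  \big[Num.max/0]_(z <- s) `|z| < 1.
Proof.
elim: s => [|z s IHs] s_lt1; first by rewrite big_nil ltr01.
rewrite big_cons /Num.max; case: ifP => _; last exact: s_lt1 (mem_head _ _).
by apply: IHs => y ys; apply: s_lt1; rewrite inE ys orbT.
Qed.

Lemma bigmax_norm_eq1 (s : seq R[i]) : {in s, forall z, `|z| <= 1} -> 1 \in s ->
  \big[Num.max/0]_(z <- s) `|z| = 1.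
Proof.
elim: s => [|z s IHs] // s_le1; rewrite inE big_cons /Num.max => /orP [/eqP <-|s1].
  have := bigmax_norm_le1 (fun y ys => s_le1 y (mem_behead ys)).
  by rewrite normr1 => /le_gtF ->.
rewrite IHs //; last by move=> y ys; apply: s_le1; rewrite inE ys orbT.
case: ifP => // /negbT z_lt1.
by have := s_le1 z (mem_head _ _); rewrite le_eqVlt (negbTE z_lt1) orbF => /eqP.
Qed.

Lemma spectral_radius_roots n (J : 'M[R]_n) :
  exists2 s : seq R[i], spectral_radius J = \big[Num.max/0]_(z <- s) `|z|
                      & forall z, (z \in s) = eigenvalue (mc J) z.
Proof.
rewrite /spectral_radius; case: closed_field_poly_normal => s /= charJ.
exists s => // z; rewrite eigenvalue_root_char charJ.
by rewrite rootZ ?root_prod_XsubC // (monicP (char_poly_monic _)) oner_neq0.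
Qed.

Lemma spectral_radius_lt1 n (J : 'M[R]_n) :
  (forall z, eigenvalue (mc J) z -> `|z| < 1) -> spectral_radius J < 1.
Proof.
move=> eig_lt1; have [s -> sJ] := spectral_radius_roots J.
by apply: bigmax_norm_lt1 => z; rewrite sJ; apply: eig_lt1.
Qed.

Lemma spectral_radius_eq1 n (J : 'M[R]_n) :
  (forall z, eigenvalue (mc J) z -> `|z| <= 1) -> eigenvalue (mc J) 1 ->
  spectral_radius J = 1.
Proof.
move=> eig_le1 eig1; have [s -> sJ] := spectral_radius_roots J.
by apply: bigmax_norm_eq1; rewrite ?sJ // => z; rewrite sJ; apply: eig_le1.
Qed.

End SpectralRadius.

Section Pencil.
Variable R : rcfType.
Local Notation mc := (map_mx (real_complex R)).
Local Notation Re_mx := (map_mx (@complex.Re R)).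
Local Notation Im_mx := (map_mx (@complex.Im R)).

Lemma qform_complex n (A : 'M[R]_n) (w : 'rV[R[i]]_n) : A^T = A ->
  (w *m mc A *m (map_mx (@conjc R) w)^T) 0 0 =
  (qform A (Re_mx w) + qform A (Im_mx w))%:C%C.
Proof.
move=> AT; set a := Re_mx w; set b := Im_mx w.
have -> : map_mx (@conjc R) w = mc a - 'i%C *: mc b.
  apply/matrixP => i j; rewrite !mxE; case: (w i j) => x y /=.
  by apply/eqP; rewrite eq_complex /= !(mul0r, mul1r, subr0, sub0r, add0r, oppr0, eqxx).
have -> : w = mc a + 'i%C *: mc b.
  by apply/matrixP => i j; rewrite !mxE [LHS]complexE mulrC.
pose bf (u v : 'rV[R[i]]_n) := (u *m mc A *m v^T) 0 0.
have bfDl u1 u2 v : bf (u1 + u2) v = bf u1 v + bf u2 v by rewrite /bf !mulmxDl mxE.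
have bfDr u v1 v2 : bf u (v1 + v2) = bf u v1 + bf u v2.
  by rewrite /bf [(v1 + v2)^T]linearD /= mulmxDr mxE.
have bfNr u v : bf u (- v) = - bf u v by rewrite /bf [(- v)^T]linearN /= mulmxN mxE.
have bfZl k u v : bf (k *: u) v = k * bf u v by rewrite /bf -!scalemxAl mxE.
have bfZr k u v : bf u (k *: v) = k * bf u v by rewrite /bf linearZ /= -scalemxAr mxE.
have bf_real x y : bf (mc x) (mc y) = ((x *m A *m y^T) 0 0)%:C%C.
  by rewrite /bf map_trmx -!map_mxM mxE.
have bf_sym : (a *m A *m b^T) 0 0 = (b *m A *m a^T) 0 0.
  have trE (X : 'M[R]_1) : X^T 0 0 = X 0 0 by rewrite mxE.
  by rewrite -[LHS]trE !trmx_mul trmxK AT mulmxA.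
rewrite -/(bf _ _) bfDl !bfDr !bfNr !bfZl !bfZr !bf_real bf_sym rmorphD /qform.
have ii : 'i%C * 'i%C = -1 :> R[i] by rewrite -expr2 sqr_i.
by rewrite mulrA ii mulN1r opprK addrA subrK.
Qed.

Lemma complex_mx_eq0 m n (w : 'M[R[i]]_(m, n)) : Re_mx w = 0 -> Im_mx w = 0 -> w = 0.
Proof.
move=> /matrixP Re0 /matrixP Im0; apply/matrixP => i j.
by have := Re0 i j; have := Im0 i j; rewrite !mxE; case: (w i j) => x y /= -> ->.
Qed.

Variables (n : nat) (A B : 'M[R]_n).
Hypotheses (AT : A^T = A) (BT : B^T = B).
Hypothesis B_psd : forall u, 0 <= qform B u.
Hypothesis AB_psd : forall u, 0 <= qform (A - B) u.
Hypothesis A_def : forall u, qform A u = 0 -> u = 0.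

Lemma pencil_eigenvalue z : eigenvalue (mc (invmx A *m B)) z ->
  exists t : R, [/\ z = t%:C%C, 0 <= t, t <= 1 &
                    ((forall u, qform (A - B) u = 0 -> u = 0) -> t < 1)].
Proof.
case/eigenvalueP => v vJ v_neq0.
have mcA_unit : mc A \in unitmx by rewrite map_unitmx qform_def_unitmx.
set w := v *m invmx (mc A).
have vE : v = w *m mc A by rewrite /w -mulmxA mulVmx // mulmx1.
have wB : w *m mc B = z *: (w *m mc A).
  by rewrite -vE -vJ map_mxM map_invmx /w mulmxA.
(* with w := v A^-1, both sides of w B w^* = z w A w^* are real *)
have hform_eq : (w *m mc B *m (map_mx (@conjc R) w)^T) 0 0 =
                z * (w *m mc A *m (map_mx (@conjc R) w)^T) 0 0.
  by rewrite wB -scalemxAl mxE.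
rewrite !qform_complex // in hform_eq.
set a := Re_mx w in hform_eq; set b := Im_mx w in hform_eq.
set alpha := qform A a + qform A b in hform_eq.
set beta := qform B a + qform B b in hform_eq.
have A_psd u : 0 <= qform A u by rewrite -[qform A u](subrK (qform B u)) -qformB addr_ge0.
have ab_neq0 : (a != 0) || (b != 0).
  apply: contraNT v_neq0; rewrite negb_or !negbK vE => /andP [/eqP a0 /eqP b0].
  by rewrite (complex_mx_eq0 a0 b0) mul0mx.
have qform_ab_gt0 S : (forall u, 0 <= qform S u) -> (forall u, qform S u = 0 -> u = 0) ->
    0 < qform S a + qform S b.
  move=> S_psd S_def; rewrite lt_def addr_ge0 // andbT paddr_eq0 // negb_and.
  by case/orP: ab_neq0 => u_neq0; apply/orP; [left|right];
     apply: contra u_neq0 => /eqP /S_def ->.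
have alpha_gt0 : 0 < alpha by apply: qform_ab_gt0.
have alpha_beta : alpha - beta = qform (A - B) a + qform (A - B) b.
  by rewrite !qformB /alpha /beta; ring.
have zE : z = (beta / alpha)%:C%C.
  have alphaC_neq0 : alpha%:C%C != 0 by rewrite eq_complex /= gt_eqF.
  by apply: (mulIf alphaC_neq0); rewrite -hform_eq -rmorphM /= divfK // gt_eqF.
exists (beta / alpha); split => //.
- by rewrite divr_ge0 ?addr_ge0 // ltW.
- by rewrite ler_pdivrMr // mul1r -subr_ge0 alpha_beta addr_ge0.
move=> AB_def; rewrite ltr_pdivrMr // mul1r -subr_gt0 alpha_beta.
exact: qform_ab_gt0.
Qed.

Lemma pencil_eigenvalue1 (u : 'rV_n) : u != 0 -> u *m (A - B) = 0 ->
  eigenvalue (mc (invmx A *m B)) 1.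
Proof.
move=> u_neq0 uAB; have A_unit : A \in unitmx by apply: qform_def_unitmx.
have uAB' : u *m A = u *m B by apply/eqP; rewrite -subr_eq0 -mulmxBr uAB.
apply/eigenvalueP; exists (mc (u *m A)).
  by rewrite -map_mxM mulmxA mulmxK // uAB' scale1r.
by rewrite map_mx_eq0; apply: contra u_neq0 => /eqP uA0;
   rewrite -(mulmxK A_unit u) uA0 mul0mx.
Qed.

Lemma spectral_radius_pencil_lt1 :
  (forall u, qform (A - B) u = 0 -> u = 0) -> spectral_radius (invmx A *m B) < 1.
Proof.
move=> AB_def; apply: spectral_radius_lt1 => z /pencil_eigenvalue [t [-> t_ge0 _ t_lt1]].
by rewrite ger0_norm ?ler0c // ltcR t_lt1.
Qed.

Lemma spectral_radius_pencil_eq1 (u : 'rV_n) : u != 0 -> u *m (A - B) = 0 ->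
  spectral_radius (invmx A *m B) = 1.
Proof.
move=> u_neq0 uAB; apply: spectral_radius_eq1; last exact: pencil_eigenvalue1 uAB.
by move=> z /pencil_eigenvalue [t [-> t_ge0 t_le1 _]]; rewrite ger0_norm ?ler0c // lecR.
Qed.

End Pencil.

Section SchurComplements.
Variables (R : rcfType) (N : nat) (Om : 'M[R]_N).
Hypothesis OmT : Om^T = Om.
Hypothesis Om_psd : forall u, 0 <= qform Om u.
Variables (nr ni nv nh : nat).
Variables (XR : 'M[R]_(N, nr)) (XI : 'M[R]_(N, ni)) (XV : 'M[R]_(N, nv)).
Variable Y : 'M[R]_(N, nh).
Variables (SR : 'M[R]_(nv, nr)) (SI : 'M[R]_(nv, ni)).
Variables (TR : 'M[R]_(nr, nv)) (TI : 'M[R]_(ni, nv)).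
Hypotheses (XR_sub : XR = XV *m SR) (XI_sub : XI = XV *m SI).
Hypothesis XV_span : XV = XR *m TR + XI *m TI.
Hypothesis ST_id : SR *m TR + SI *m TI = 1%:M.
Hypothesis indep : forall cR cI cH,
  qform Om (cR *m XR^T + cI *m XI^T + cH *m Y^T) = 0 -> [/\ cR = 0, cI = 0 & cH = 0].

Local Notation gram := (gram Om).
Local Notation hatmx := (hatmx Om).
Local Notation resid := (resid Om).

Let A := gram Y Y - gram Y XR *m invmx (gram XR XR) *m gram XR Y.
Let B := gram Y Y - gram Y XV *m invmx (gram XV XV) *m gram XV Y.
Let Q := gram XI Y - gram XI XR *m invmx (gram XR XR) *m gram XR Y.
Let ZI := resid XR XI.
Let CI := gram ZI ZI.

Lemma gramR_unit : gram XR XR \in unitmx.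
Proof. by apply: gram_unitmx => c c0; have [] := @indep c 0 0; rewrite ?mul0mx ?addr0. Qed.

Lemma gramV_unit : gram XV XV \in unitmx.
Proof.
apply: gram_unitmx => c.
rewrite [in c *m _]XV_span linearD /= !trmx_mul mulmxDr !mulmxA => c0.
have [|cTR cTI _] := @indep (c *m TR^T) (c *m TI^T) 0; first by rewrite mul0mx addr0.
rewrite -[c]mulmx1 -trmx1 -ST_id linearD /= !trmx_mul mulmxDr !mulmxA.
by rewrite cTR cTI !mul0mx addr0.
Qed.

Lemma residI_free c : qform Om (c *m ZI^T) = 0 -> c = 0.
Proof.
rewrite /ZI mul_tr_resid // => c0.
by have [|_ -> _] := @indep (- (c *m gram XI XR *m invmx (gram XR XR))) c 0;
  rewrite // mul0mx addr0.
Qed.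

Lemma residY_free c : qform Om (c *m (resid XR Y)^T) = 0 -> c = 0.
Proof.
rewrite mul_tr_resid // => c0.
by have [|_ _ ->] := @indep (- (c *m gram Y XR *m invmx (gram XR XR))) 0 c;
  rewrite // mul0mx addr0.
Qed.

Lemma CI_unit : CI \in unitmx.
Proof. exact: gram_unitmx residI_free. Qed.

Lemma gram_residI_R : gram ZI XR = 0.
Proof. by rewrite /ZI gram_resid // gramR_unit. Qed.

Lemma gram_residI_I : gram ZI XI = CI.
Proof.
rewrite /CI {3}/ZI /resid /gram mulmxBr hatmxE !mulmxA.
by rewrite -[ZI^T *m Om *m XR]/(gram ZI XR) gram_residI_R !mul0mx subr0.
Qed.

Lemma residI_span :
  ZI = XV *m (SI - SR *m invmx (gram XR XR) *m XR^T *m Om *m XI).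
Proof. by rewrite /ZI /resid hatmxE mulmxBr !mulmxA -XI_sub -XR_sub. Qed.

(* the column space of [XV] is the Om-orthogonal sum of those of [XR] and [ZI] *)
Lemma hatmxV_split : hatmx XV = hatmx XR + ZI *m invmx CI *m ZI^T.
Proof.
have POmR : (hatmx XR + ZI *m invmx CI *m ZI^T) *m Om *m XR = XR.
  rewrite 2!mulmxDl hatmx_id ?gramR_unit // -!mulmxA (mulmxA ZI^T).
  by rewrite -/(gram ZI XR) gram_residI_R !mulmx0 addr0.
have POmI : (hatmx XR + ZI *m invmx CI *m ZI^T) *m Om *m XI = XI.
  rewrite 2!mulmxDl -!mulmxA (mulmxA ZI^T) -/(gram ZI XI) gram_residI_I.
  by rewrite mulVmx ?CI_unit // mulmx1 /ZI /resid mulmxA addrC subrK.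
symmetry; apply: (hatmx_unique OmT gramV_unit (K :=
  SR *m invmx (gram XR XR) *m XR^T +
  (SI - SR *m invmx (gram XR XR) *m XR^T *m Om *m XI) *m invmx CI *m ZI^T)).
- by rewrite linearD /= hatmxT // !trmx_mul trmxK trmx_inv [CI^T]gramT // mulmxA.
- by rewrite mulmxDr hatmxE {1}residI_span !mulmxA -XR_sub.
- by rewrite XV_span mulmxDr !mulmxA POmR POmI.
Qed.

Lemma schurQ_gram : Q = gram ZI Y.
Proof.
rewrite /Q mul_gram_inv /ZI /resid /gram [(XI - _)^T]linearB /= !trmx_mul hatmxT //.
by rewrite OmT !mulmxBl !mulmxA.
Qed.

Lemma schur_diffE : A - B = Q^T *m invmx CI *m Q.
Proof.
rewrite /A /B !mul_gram_inv opprB addrC addrA subrK hatmxV_split.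
rewrite mulmxDr 2!mulmxDl addrC addKr schurQ_gram !trmx_mul trmxK OmT.
by rewrite !mulmxA.
Qed.

Lemma qform_schur_diff u :
  qform (A - B) u = qform Om (u *m Q^T *m invmx CI *m ZI^T).
Proof.
set s := u *m Q^T *m invmx CI.
have uQ : u *m Q^T = s *m CI by rewrite /s -mulmxA mulVmx ?CI_unit // mulmx1.
have Qu : Q *m u^T = CI *m s^T by rewrite -[Q]trmxK -trmx_mul uQ trmx_mul gramT.
by rewrite -qform_gram schur_diffE /qform -!mulmxA Qu !mulmxA uQ.
Qed.

Lemma schurA_gram : A = gram (resid XR Y) (resid XR Y).
Proof. by rewrite /A (schur_gram OmT gramR_unit). Qed.

Lemma schurB_gram : B = gram (resid XV Y) (resid XV Y).
Proof. by rewrite /B (schur_gram OmT gramV_unit). Qed.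

Lemma schur_spectral_radius : nh = ni ->
  (\rank Q = ni -> spectral_radius (invmx A *m B) < 1) /\
  (\rank Q <> ni -> spectral_radius (invmx A *m B) = 1).
Proof.
move=> nh_ni; have rowfreeE : row_free Q^T = (\rank Q == ni).
  by rewrite /row_free mxrank_tr; congr (_ == _).
have AT : A^T = A by rewrite schurA_gram gramT.
have BT : B^T = B by rewrite schurB_gram gramT.
have B_psd u : 0 <= qform B u by rewrite schurB_gram qform_gram.
have AB_psd u : 0 <= qform (A - B) u by rewrite qform_schur_diff.
have A_def u : qform A u = 0 -> u = 0 by rewrite schurA_gram qform_gram; apply: residY_free.
split => [rkQ | rkQ].
  apply: spectral_radius_pencil_lt1 => // u.
  rewrite qform_schur_diff => /residI_free uQ0; apply/eqP.
  rewrite -(mulmx_free_eq0 _ (_ : row_free Q^T)) ?rowfreeE ?rkQ //.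
  by rewrite -[u *m Q^T](mulmxKV CI_unit) uQ0 mul0mx.
have : ~~ row_free Q^T by rewrite rowfreeE; apply/eqP.
rewrite -kermx_eq0 => /rowV0Pn [u /sub_kermxP uQ u_neq0].
apply: (spectral_radius_pencil_eq1 AT BT B_psd AB_psd A_def u_neq0).
by rewrite schur_diffE !mulmxA uQ !mul0mx.
Qed.

End SchurComplements.

Lemma weighted_variance (R : comPzRingType) (I : finType) (p x : I -> R) :
  \sum_i p i = 1 ->
  \sum_i p i * (x i - \sum_j p j * x j) ^+ 2 =
  \sum_i p i * x i ^+ 2 - (\sum_i p i * x i) ^+ 2.
Proof.
set m := \sum_j p j * x j => p_sum.
rewrite (eq_bigr (fun i => p i * x i ^+ 2 - 2%:R * m * (p i * x i) + m ^+ 2 * p i));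
  last by move=> i _; ring.
by rewrite big_split sumrB /= -!mulr_sumr -/m p_sum; ring.
Qed.

Section Cells.
Variables (d : nat) (r : 'I_d -> nat) (M : {set 'I_d}).
Local Notation cell := (cell r M).
Variable R : rcfType.

Definition cell0 : cell.
Proof.
exists (@finfun _ (fun j => 'I_(r j).+1) (fun j => ord0)).
by apply/forallP => j; rewrite ffunE implybT.
Defined.

Lemma cell_ext (x y : cell) :
  (forall j, nat_of_ord (val x j) = nat_of_ord (val y j)) -> x = y.
Proof. by move=> xy; apply/val_inj/ffunP => j; apply/val_inj/xy. Qed.

Lemma Gentry_neq0 (y x : cell) : Gentry R y x != 0 ->
  {in supp x, forall j, nat_of_ord (val y j) = nat_of_ord (val x j)}.
Proof.
move=> Gyx j jx; apply/eqP; apply: contraNT Gyx => yx_neq.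
by rewrite /Gentry (bigD1 j) //= (negbTE yx_neq) mul0r.
Qed.

Lemma Gentry_diag (x : cell) : Gentry R x x = 1.
Proof. by rewrite /Gentry big1 // => j _; rewrite eqxx. Qed.

Lemma Gentry_cell0 (x : cell) : supp x != set0 -> Gentry R cell0 x = 0.
Proof.
case/set0Pn => j jx; rewrite /Gentry (bigD1 j) //=.
by move: jx; rewrite inE ffunE eq_sym => /negbTE ->; rewrite mul0r.
Qed.

(* [Gentry y x != 0] forces [supp x \subset supp y], strictly unless [y = x]: the
   design matrix over all cells is unitriangular for the support order, its
   empty-support column being the constant one. *)
Lemma Gentry_comb_eq0 (f : cell -> R) m :
  (forall x, supp x = set0 -> f x = 0) ->
  (forall y, \sum_x f x * Gentry R y x = m) -> forall x, f x = 0.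
Proof.
move=> f_supp0 f_const.
have m0 : m = 0.
  rewrite -(f_const cell0) big1 // => x _.
  have [x0|x_neq0] := eqVneq (supp x) set0; first by rewrite f_supp0 ?mul0r.
  by rewrite Gentry_cell0 // mulr0.
suff f0 n x : (#|supp x| <= n)%N -> f x = 0 by move=> x; apply: f0 (leqnn _).
elim: n x => [|n IHn] x x_le; first by apply: f_supp0; apply/eqP; rewrite -cards_eq0 -leqn0.
have := f_const x; rewrite m0 (bigD1 x) //= Gentry_diag mulr1 big1 ?addr0 // => x' x'_neq.
have [->|Gxx'] := eqVneq (Gentry R x x') 0; first by rewrite mulr0.
rewrite IHn ?mul0r // -ltnS (leq_trans _ x_le) // proper_card // properEneq.
have agree := Gentry_neq0 Gxx'.
apply/andP; split; last first.
  by apply/subsetP => j jx'; have := jx'; rewrite !inE agree.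
apply: contra x'_neq => /eqP supp_eq; apply/eqP/cell_ext => j.
have [jx'|jx'] := boolP (j \in supp x'); first by rewrite agree.
by move: jx' (jx'); rewrite {2}supp_eq !inE !negbK => /eqP -> /eqP ->.
Qed.

Definition selmx (A B : {set cell}) : 'M[R]_(#|A|, #|B|) :=
  \matrix_(k, j) (enum_val k == enum_val j)%:R.

Lemma sum_mul_selmx (A : {set cell}) (F : cell -> R) c :
  \sum_(k < #|A|) F (enum_val k) * (enum_val k == c)%:R = (c \in A)%:R * F c.
Proof.
rewrite -(big_enum_val (fun x => F x * (x == c)%:R)).
have [cA|cA] := boolP (c \in A).
  rewrite (bigD1 c) //= eqxx mulr1 mul1r big1 ?addr0 // => x /andP [_ /negbTE ->].
  by rewrite mulr0.
rewrite mul0r big1 // => x xA; case: eqP => [xc|_]; last by rewrite mulr0.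
by move: cA; rewrite -xc xA.
Qed.

Lemma Gmx_selmx (A B : {set cell}) : B \subset A ->
  Gmx R B = Gmx R A *m selmx A B.
Proof.
move=> BA; apply/matrixP => i j; rewrite !mxE.
under eq_bigr => k _ do rewrite !mxE.
by rewrite sum_mul_selmx (subsetP BA _ (enum_valP j)) mul1r.
Qed.

Definition cell_coef (A : {set cell}) (c : 'rV[R]_#|A|) (x : cell) : R :=
  \sum_k c 0 k * (enum_val k == x)%:R.

Lemma cell_coef_enum (A : {set cell}) (c : 'rV[R]_#|A|) k :
  cell_coef c (enum_val k) = c 0 k.
Proof.
rewrite /cell_coef (bigD1 k) //= eqxx mulr1 big1 ?addr0 // => k' /negbTE k'k.
by rewrite (inj_eq enum_val_inj) k'k mulr0.
Qed.

Lemma cell_coef_notin (A : {set cell}) (c : 'rV[R]_#|A|) x :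
  x \notin A -> cell_coef c x = 0.
Proof.
move=> xA; rewrite /cell_coef big1 // => k _; case: eqP => [kx|_]; last by rewrite mulr0.
by move: xA; rewrite -kx enum_valP.
Qed.

Lemma mul_trGmx (A : {set cell}) (c : 'rV[R]_#|A|) i :
  (c *m (Gmx R A)^T) 0 i = \sum_x cell_coef c x * Gentry R (enum_val i) x.
Proof.
rewrite mxE /cell_coef; under [RHS]eq_bigr => x _ do rewrite mulr_suml.
rewrite exchange_big /=; apply: eq_bigr => k _; rewrite !mxE.
rewrite (bigD1 (enum_val k)) //= eqxx mulr1 big1 ?addr0 // => x /negbTE.
by rewrite eq_sym => ->; rewrite mulr0 mul0r.
Qed.

Variable pi : cell -> R.
Hypothesis pi_pos : forall x, 0 < pi x.
Hypothesis pi_sum : \sum_x pi x = 1.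
Local Notation p i := (pi (enum_val i)).

Lemma Omega_sym : (Omega pi)^T = Omega pi.
Proof.
apply/matrixP => i k; rewrite !mxE.
by have [->|ik] := eqVneq i k; rewrite // !mul0r !sub0r mulrC.
Qed.

(* Omega is the covariance matrix of the cell indicators *)
Lemma qform_Omega (u : 'rV[R]_#|{: cell}|) :
  qform (Omega pi) u = \sum_i p i * (u 0 i - \sum_k p k * u 0 k) ^+ 2.
Proof.
have sum1 : \sum_(i < #|{: cell}|) p i = 1.
  by rewrite -pi_sum -(big_enum_val (A := {: cell}) pi); apply: eq_bigl => x; rewrite inE.
rewrite weighted_variance // /qform mxE [X in _ - X]expr2 mulr_sumr -sumrB.
apply: eq_bigr => k _; rewrite [(u *m _) 0 k]mxE.
rewrite (eq_bigr (fun j => (j == k)%:R * (p j * u 0 j) - p j * u 0 j * p k)); last first.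
  by move=> j _; rewrite mxE; ring.
rewrite sumrB (bigD1 k) //= eqxx mul1r big1 ?addr0 => [|j /negbTE ->]; last by rewrite mul0r.
by rewrite -mulr_suml mxE; ring.
Qed.

Lemma Omega_psd u : 0 <= qform (Omega pi) u.
Proof.
by rewrite qform_Omega sumr_ge0 // => i _; rewrite mulr_ge0 ?sqr_ge0 ?ltW.
Qed.

Lemma qform_Omega_eq0 u : qform (Omega pi) u = 0 ->
  forall i, u 0 i = \sum_k p k * u 0 k.
Proof.
rewrite qform_Omega => /eqP; rewrite psumr_eq0 => [/allP u_const i|i _]; last first.
  by rewrite mulr_ge0 ?sqr_ge0 ?ltW.
have := u_const i (mem_index_enum _); rewrite mulf_eq0 gt_eqF //=.
by rewrite sqrf_eq0 subr_eq0 => /eqP.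
Qed.

End Cells.

Lemma card_hcols d r M (H : seq (@iblock d r M)) : uniq H ->
  {in H &, forall b c, b != c -> [disjoint bcols b & bcols c]} ->
  #|hcols H| = (\sum_(b <- H) #|bcols b|)%N.
Proof.
elim: H => [|b H IHH] /=; first by rewrite /hcols !big_nil cards0.
move=> /andP [bH H_uniq] H_disj.
rewrite /hcols !big_cons -/(hcols H) cardsU IHH //; last first.
  by move=> x y xH yH; apply: H_disj; rewrite inE ?xH ?yH orbT.
suff -> : bcols b :&: hcols H = set0 by rewrite cards0 subn0.
apply: disjoint_setI0; rewrite /hcols bigcup_seq; apply: bigcup_disjoint => c cH.
by apply: H_disj; rewrite ?inE ?eqxx ?cH ?orbT //; apply: contraNneq bH => ->.
Qed.

Section Collections.
Variables (d : nat) (r : 'I_d -> nat) (M : {set 'I_d}) (R : rcfType).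
Local Notation cell := (cell r M).
Variables (pi : cell -> R) (V I : {set {set 'I_d}}) (H : seq (iblock r M)).
Hypothesis V_ok : forall v, v \in V -> (v != set0) && (v \subset M).
Hypothesis IV : I \subset V.
Hypothesis H_ok : forall b, b \in H -> iblock_ok b && (ib_v b \notin V).

Local Notation colsR := (cols r M (V :\: I)).
Local Notation colsI := (cols r M I).
Local Notation colsV := (cols r M V).

Lemma mem_hcols x : x \in hcols H -> (supp x \notin V) && (supp x != set0).
Proof.
rewrite /hcols bigcup_seq => /bigcupP [b bH]; rewrite inE => /andP [/eqP -> _].
by have /andP [/and3P [-> _ _] ->] := H_ok bH.
Qed.

Lemma mem_colsR x : x \in colsR -> [/\ supp x \in V, supp x \notin I & supp x != set0].
Proof. by rewrite !inE => /andP [xI xV]; have /andP [] := V_ok xV. Qed.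

Lemma mem_colsI x : x \in colsI -> [/\ supp x \in V, supp x \in I & supp x != set0].
Proof.
by rewrite inE => xI; have xV := subsetP IV _ xI; have /andP [] := V_ok xV.
Qed.

Lemma colsR_sub : colsR \subset colsV.
Proof. by apply/subsetP => x /mem_colsR []; rewrite inE. Qed.

Lemma colsI_sub : colsI \subset colsV.
Proof. by apply/subsetP => x /mem_colsI []; rewrite inE. Qed.

Lemma colsV_split x : x \in colsV -> (x \in colsR)%:R + (x \in colsI)%:R = 1 :> R.
Proof. by rewrite !inE => ->; case: (supp x \in I); rewrite ?addr0 ?add0r. Qed.

Lemma GmxV_split :
  Gmx R colsV = Gmx R colsR *m selmx R colsR colsV + Gmx R colsI *m selmx R colsI colsV.
Proof.
apply/matrixP => i j; rewrite !mxE.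
under eq_bigr => k _ do rewrite !mxE.
under [X in _ = _ + X]eq_bigr => k _ do rewrite !mxE.
by rewrite !sum_mul_selmx -mulrDl colsV_split ?mul1r ?enum_valP.
Qed.

Lemma selmxV_split :
  selmx R colsV colsR *m selmx R colsR colsV + selmx R colsV colsI *m selmx R colsI colsV
  = 1%:M.
Proof.
apply/matrixP => k k'; rewrite !mxE.
under eq_bigr => j _ do rewrite !mxE.
under [X in _ + X = _]eq_bigr => j _ do rewrite !mxE.
rewrite (sum_mul_selmx _ (fun y => (enum_val k == y)%:R)).
rewrite (sum_mul_selmx _ (fun y => (enum_val k == y)%:R)).
by rewrite -mulrDl colsV_split ?mul1r ?enum_valP // (inj_eq enum_val_inj).
Qed.

Hypothesis pi_pos : forall x, 0 < pi x.
Hypothesis pi_sum : \sum_x pi x = 1.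

Lemma Gmx_free (cR : 'rV[R]_#|colsR|) (cI : 'rV[R]_#|colsI|) (cH : 'rV[R]_#|hcols H|) :
  qform (Omega pi)
    (cR *m (Gmx R colsR)^T + cI *m (Gmx R colsI)^T + cH *m (Gmx R (hcols H))^T) = 0 ->
  [/\ cR = 0, cI = 0 & cH = 0].
Proof.
set w := (X in qform _ X) => /(qform_Omega_eq0 pi_pos pi_sum) w_const.
pose f x := cell_coef cR x + cell_coef cI x + cell_coef cH x.
have fG y : \sum_x f x * Gentry R y x = w 0 (enum_rank y).
  rewrite /w 2!mxE !mul_trGmx enum_rankK -!big_split /=.
  by apply: eq_bigr => x _; rewrite /f !mulrDl.
have f0 x : f x = 0.
  apply: (Gentry_comb_eq0 _ (fun y => etrans (fG y) (w_const _))) => {}x x0.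
  rewrite /f !cell_coef_notin ?addr0 //.
  - by apply/negP => /mem_hcols; rewrite x0 eqxx andbF.
  - by apply/negP => /mem_colsI []; rewrite x0 eqxx.
  - by apply/negP => /mem_colsR []; rewrite x0 eqxx.
split; apply/rowP => k; rewrite mxE; have := f0 (enum_val k); rewrite /f.
- have [kV kI _] := mem_colsR (enum_valP k).
  rewrite cell_coef_enum !cell_coef_notin ?addr0 //.
  + by apply/negP => /mem_hcols; rewrite kV.
  + by apply/negP => /mem_colsI []; rewrite (negbTE kI).
- have [kV kI _] := mem_colsI (enum_valP k).
  rewrite cell_coef_enum !cell_coef_notin ?addr0 ?add0r //.
  + by apply/negP => /mem_hcols; rewrite kV.
  + by apply/negP => /mem_colsR []; rewrite kI.
- have /andP [kV _] := mem_hcols (enum_valP k).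
  rewrite cell_coef_enum !cell_coef_notin ?add0r //.
  + by apply/negP => /mem_colsI []; rewrite (negbTE kV).
  + by apply/negP => /mem_colsR []; rewrite (negbTE kV).
Qed.

End Collections.

Theorem lemma4 (R : rcfType) (d : nat) (r : 'I_d -> nat) (M : {set 'I_d})
    (pi : cell r M -> R)
    (pi_pos : forall x, 0 < pi x)
    (pi_sum : \sum_x pi x = 1)
    (V I : {set {set 'I_d}})
    (V_ok : forall v, v \in V -> (v != set0) && (v \subset M))
    (IV : I \subset V)
    (H : seq (iblock r M))
    (H_ok : forall b, b \in H -> iblock_ok b && (ib_v b \notin V))
    (H_uniq : uniq H)
    (H_disj : {in H &, forall b c, b != c -> [disjoint bcols b & bcols c]})
    (H_card : (\sum_(b <- H) #|bcols b| = #|cols r M I|)%N) :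
  (\rank (Qmx pi I (V :\: I) H) = #|cols r M I| ->
     spectral_radius (Jmx pi V I H) < 1) /\
  (\rank (Qmx pi I (V :\: I) H) <> #|cols r M I| ->
     spectral_radius (Jmx pi V I H) = 1).
Proof.
have card_HI : #|hcols H| = #|cols r M I| by rewrite card_hcols.
exact (schur_spectral_radius (Omega_sym pi) (Omega_psd pi_pos pi_sum)
  (Gmx_selmx R (colsR_sub r I V_ok)) (Gmx_selmx R (colsI_sub r V_ok IV))
  (GmxV_split r M R V I) (selmxV_split r M R V I)
  (Gmx_free V_ok IV H_ok pi_pos pi_sum) card_HI).
Qed.
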